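(* Let $p>1$, $s\ge r\ge2$, let $Q$ be an $s$-vertex $r$-graph and let $\mathcal P$ be a hereditary property of $r$-graphs with $\lambda^{(p)}(Q,\mathcal P)>0$. For each $n\ge s$ let $H_n\in\mathcal P_n$ satisfy $\lambda^{(p)}(Q,H_n)=\lambda^{(p)}(Q,\mathcal P_n)$ and let $\mathbf x^{(n)}$ be a principal $Q$-eigenvector of $H_n$ (for $p$). Then there exist infinitely many $n$ such that $$\big(\mathbf x^{(n)}_{\min}\big)^{p}\ge\frac1n\Big(1-\frac{p}{(p-1)s\log n}\Big).$$
   Context: An $r$-graph ($r\ge 2$) is a finite hypergraph all of whose edges have exactly $r$ vertices. For $I\subseteq V(H)$, $H[I]$ denotes the induced subhypergraph on $I$. For an $s$-vertex $r$-graph $Q$ and an $r$-graph $H$, $\mathcal N(Q,H)$ is the number of (not necessarily induced) subgraphs of $H$ isomorphic to $Q$. For an $n$-vertex $r$-graph $H$ with vertex set $[n]$ and $\mathbf x\in\mathbb R^n$, $P_{Q,H}(\mathbf x)=s!\sum_{\{i_1,\dots,i_s\}\in\binom{[n]}{s}}\mathcal N(Q,H[\{i_1,\dots,i_s\}])\,x_{i_1}\cdots x_{i_s}$, and for $p\ge1$, $\lambda^{(p)}(Q,H)=\max_{\|\mathbf x\|_p=1}P_{Q,H}(\mathbf x)$. A principal $Q$-eigenvector of $H$ is a nonnegative vector $\mathbf x$ with $\|\mathbf x\|_p=1$ and $P_{Q,H}(\mathbf x)=\lambda^{(p)}(Q,H)$; $\mathbf x_{\min}$ denotes its smallest entry.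 A hereditary property $\mathcal P$ of $r$-graphs is a family of $r$-graphs closed under isomorphism and under taking induced subgraphs; as a standing assumption, whenever $H\in\mathcal P$, the disjoint union of $H$ with an isolated vertex is also in $\mathcal P$. $\mathcal P_n$ is the set of members of $\mathcal P$ with $n$ vertices; $\lambda^{(p)}(Q,\mathcal P_n)=\max\{\lambda^{(p)}(Q,H):H\in\mathcal P_n\}$ and $\lambda^{(p)}(Q,\mathcal P)=\lim_{n\to\infty}\lambda^{(p)}(Q,\mathcal P_n)n^{s/p-s}$ (this limit exists). $\log$ is the natural logarithm. *)

From HB Require Import structures.
From mathcomp Require Import all_boot all_order all_algebra.
From mathcomp Require Import all_classical all_reals all_analysis.
Set Implicit Arguments. Unset Strict Implicit. Unset Printing Implicit Defensive.
Import Order.TTheory GRing.Theory Num.Theory.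
Local Open Scope ring_scope.

Definition is_rgraph (r n : nat) (E : {set {set 'I_n}}) : Prop :=
  forall e, e \in E -> #|e| = r.

(* N(Q, H[I]) : number of (not necessarily induced) subgraphs of H[I]
   isomorphic to Q, where Q has vertex set 'I_s and #|I| = s.  Such a
   subgraph has vertex set I and is determined by its edge set, which is
   the image of E(Q) under a bijection 'I_s -> I mapping edges of Q into H. *)
Definition img_edges (s n : nat) (f : 'I_s -> 'I_n) (EQ : {set {set 'I_s}})
  : {set {set 'I_n}} := imset (fun e : {set 'I_s} => f @: e) (mem EQ).

Definition NQ (s n : nat) (EQ : {set {set 'I_s}}) (H : {set {set 'I_n}})
  (I : {set 'I_n}) : nat :=
  #|[set img_edges f EQ | f : {ffun 'I_s -> 'I_n} &
      [&& injectiveb f, f @: [set: 'I_s] == I & img_edges f EQ \subset H]]|.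

Definition PQH (R : realType) (s n : nat) (EQ : {set {set 'I_s}})
  (H : {set {set 'I_n}}) (x : 'I_n -> R) : R :=
  (s`!)%:R * \sum_(I : {set 'I_n} | #|I| == s)
      (NQ EQ H I)%:R * \prod_(i in I) x i.

Definition graph_property := forall n : nat, {set {set 'I_n}} -> Prop.

(* hereditary property of r-graphs with the standing assumption:
   - members are r-graphs;
   - closed under isomorphism and induced subgraphs (equivalently, under
     pulling back along injections 'I_m -> 'I_n);
   - closed under adding an isolated vertex. *)
Definition hereditary (r : nat) (P : graph_property) : Prop :=
  [/\ (forall n H, P n H -> is_rgraph r H),
      (forall m n (f : 'I_m -> 'I_n), injective f ->
         forall H, P n H -> P m [set e : {set 'I_m} | f @: e \in H]) &
      (forall n H, P n H -> P n.+1 (imset (fun e : {set 'I_n} => widen_ord (leqnSn n) @: e) (mem H)))].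

Local Open Scope classical_set_scope.

Definition pnorm (R : realType) (n : nat) (p : R) (x : 'I_n -> R) : R :=
  (\sum_(i < n) `|x i| `^ p) `^ (p^-1).

Definition lamQH (R : realType) (p : R) (s n : nat) (EQ : {set {set 'I_s}})
  (H : {set {set 'I_n}}) : R :=
  sup [set PQH EQ H x | x in [set x : 'I_n -> R | pnorm p x = 1]].

Definition principal_eigvec (R : realType) (p : R) (s n : nat)
  (EQ : {set {set 'I_s}}) (H : {set {set 'I_n}}) (x : 'I_n -> R) : Prop :=
  (forall i, 0 <= x i) /\ pnorm p x = 1 /\ PQH EQ H x = lamQH p EQ H.

Definition xmin (R : realType) (n : nat) (x : 'I_n -> R) : R := inf (range x).

Definition lamQPn (R : realType) (p : R) (s : nat) (EQ : {set {set 'I_s}})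
  (P : graph_property) (n : nat) : R :=
  sup [set lamQH p EQ H | H in [set H | P n H]].

(* the normalized sequence whose limit is lambda^(p)(Q, P) *)
Definition lamQP_seq (R : realType) (p : R) (s : nat) (EQ : {set {set 'I_s}})
  (P : graph_property) (n : nat) : R :=
  lamQPn p EQ P n * (n%:R) `^ (s%:R / p - s%:R).

From HB Require Import structures.
From mathcomp Require Import all_boot all_order all_algebra.
From mathcomp Require Import all_classical all_reals all_analysis.
From mathcomp Require Import ring lra zify.
Import Order.TTheory GRing.Theory Num.Theory numFieldNormedType.Exports.
Set Implicit Arguments. Unset Strict Implicit. Unset Printing Implicit Defensive.
Local Open Scope ring_scope.

(* Suppose the bound fails for every large n, and let k be a vertex where the
   principal eigenvector x of H_{n+1} is minimal, t = x_k^p.  Splitting P_{Q,H}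
   according to whether an s-set contains k, first-order optimality of x in the
   direction of x_k bounds the part through k by s lambda t, and rescaling the
   rest of x to the unit sphere of H - k gives
     lambda(H_{n+1}) (1 - s t) <= lambda(P_n) (1 - t)^(s/p).
   For t below the assumed threshold this makes the potential
     ln lambda(P_n) - (s - s/p) ln n + ln (ln n) / 4
   nonincreasing for large n.  But the normalized sequence
   lambda(P_n) n^(s/p - s) tends to L > 0, so the potential is at least
   ln (L/2) + ln (ln n) / 4, which is unbounded. *)

Section QPolynomial.
Variables (R : realType) (s : nat) (EQ : {set {set 'I_s}}).
Local Open Scope classical_set_scope.

Lemma PQH_ge0 n (H : {set {set 'I_n}}) (x : 'I_n -> R) :
  (forall i, 0 <= x i) -> 0 <= PQH EQ H x.
Proof.
move=> x_ge0; rewrite mulr_ge0 // sumr_ge0 // => I _.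
by rewrite mulr_ge0 // prodr_ge0.
Qed.

Lemma PQH_scale n (H : {set {set 'I_n}}) (x : 'I_n -> R) c :
  PQH EQ H (fun i => c * x i) = c ^+ s * PQH EQ H x.
Proof.
rewrite /PQH mulrCA; congr (_ * _); rewrite mulr_sumr; apply: eq_bigr => I /eqP cardI.
by rewrite prodrMl cardI mulrCA.
Qed.

Definition PQH_bound n : R :=
  (s`!)%:R * \sum_(I : {set 'I_n} | #|I| == s) #|{ffun 'I_s -> 'I_n}|%:R.

Lemma PQH_le_bound n (H : {set {set 'I_n}}) (x : 'I_n -> R) :
  (forall i, `|x i| <= 1) -> PQH EQ H x <= PQH_bound n.
Proof.
move=> x_le1; rewrite ler_wpM2l // ler_sum // => I _.
have prod_le1 : \prod_(i in I) x i <= 1.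
  apply: le_trans (ler_norm _) _; rewrite normr_prod prodr_ile1 // => i _.
  by rewrite normr_ge0 x_le1.
apply: le_trans (_ : (NQ EQ H I)%:R * 1 <= _); first by rewrite ler_wpM2l.
by rewrite mulr1 ler_nat (leq_trans (leq_imset_card _ _)) // max_card.
Qed.

Variable p : R.
Hypothesis p_gt0 : 0 < p.

Lemma pnorm_eq1 n (x : 'I_n -> R) :
  pnorm p x = 1 <-> \sum_(i < n) `|x i| `^ p = 1.
Proof.
split=> [|sum1]; last by rewrite /pnorm sum1 powR1.
have sum_ge0 : 0 <= \sum_(i < n) `|x i| `^ p by rewrite sumr_ge0.
have inv_p : p^-1 * p = 1 by rewrite mulVf ?gt_eqF.
by rewrite /pnorm => norm1; rewrite -[LHS](powRr1 sum_ge0) -{1}inv_p powRrM norm1 powR1.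
Qed.

Lemma pnorm_eq1_le1 n (x : 'I_n -> R) i : pnorm p x = 1 -> `|x i| <= 1.
Proof.
move=> /pnorm_eq1 sum1.
have pow_le1 : `|x i| `^ p <= 1 by rewrite -sum1 (bigD1 i) //= lerDl sumr_ge0.
rewrite leNgt; apply/negP => gt1.
have := @gt0_ltr_powR R p p_gt0 1 `|x i|.
rewrite !nnegrE ler01 normr_ge0 powR1 => /(_ isT isT gt1).
by rewrite ltNge pow_le1.
Qed.

Lemma PQH_le_lamQH n (H : {set {set 'I_n}}) (y : 'I_n -> R) :
  pnorm p y = 1 -> PQH EQ H y <= lamQH p EQ H.
Proof.
move=> y1; apply: sup_upper_bound; last by exists y.
split; first by exists (PQH EQ H y), y.
by exists (PQH_bound n) => _ [z z1 <-]; apply: PQH_le_bound => i; apply: pnorm_eq1_le1.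
Qed.

Lemma lamQH_le_bound n (H : {set {set 'I_n}}) : lamQH p EQ H <= PQH_bound n.
Proof.
have bound_ge0 : 0 <= PQH_bound n by rewrite mulr_ge0 // sumr_ge0.
rewrite /lamQH; set A := [set _ | _ in _].
have [-> | ne] := eqVneq A set0; first by rewrite sup0.
apply: ge_sup; first exact/set0P.
by move=> _ [z z1 <-]; apply: PQH_le_bound => i; apply: pnorm_eq1_le1.
Qed.

Lemma lamQH_le_lamQPn (P : graph_property) n (G : {set {set 'I_n}}) :
  P n G -> lamQH p EQ G <= lamQPn p EQ P n.
Proof.
move=> PG; apply: sup_upper_bound; last by exists G.
split; first by exists (lamQH p EQ G), G.
by exists (PQH_bound n) => _ [K _ <-]; apply: lamQH_le_bound.
Qed.

(* Rescale [y] to the unit sphere and use the homogeneity of degree [s]. *)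
Lemma PQH_le_lamQH_powR n (H : {set {set 'I_n}}) (y : 'I_n -> R) :
  (forall i, 0 <= y i) -> 0 < \sum_(i < n) y i `^ p ->
  PQH EQ H y <= lamQH p EQ H * (\sum_(i < n) y i `^ p) `^ (s%:R / p).
Proof.
move=> y_ge0; set S := \sum_(i < n) _ => S_gt0.
set c := S `^ (- p^-1).
have c_ge0 : 0 <= c by rewrite powR_ge0.
have cy1 : pnorm p (fun i => c * y i) = 1.
  apply/pnorm_eq1.
  under eq_bigr => i _ do rewrite ger0_norm ?mulr_ge0 // powRM //.
  rewrite -mulr_sumr /c -powRrM mulNr mulVf ?gt_eqF // powR_inv1 ?ltW //.
  by rewrite mulVf ?gt_eqF.
have := PQH_le_lamQH H cy1; rewrite PQH_scale.
have -> : c ^+ s = (S `^ (s%:R / p))^-1.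
  by rewrite -powR_mulrn // /c -powRrM -powRN mulrC mulrN.
by rewrite mulrC -ler_pdivrMr ?invr_gt0 ?powR_gt0 // invrK.
Qed.

End QPolynomial.

Section VertexDeletion.
Variables (R : realType) (s : nat) (EQ : {set {set 'I_s}}).
Variables (n : nat) (k : 'I_n.+1) (H : {set {set 'I_n.+1}}).

Definition delete_vertex : {set {set 'I_n}} := [set e : {set 'I_n} | lift k @: e \in H].

Definition PQH_avoiding (x : 'I_n.+1 -> R) : R := (s`!)%:R *
  \sum_(I : {set 'I_n.+1} | (#|I| == s) && (k \notin I))
    (NQ EQ H I)%:R * \prod_(i in I) x i.

Definition PQH_link (x : 'I_n.+1 -> R) : R := (s`!)%:R *
  \sum_(I : {set 'I_n.+1} | (#|I| == s) && (k \in I))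
    (NQ EQ H I)%:R * \prod_(i in I :\ k) x i.

Lemma PQH_split x : PQH EQ H x = PQH_avoiding x + x k * PQH_link x.
Proof.
rewrite /PQH (bigID (fun I : {set 'I_n.+1} => k \in I)
  (fun I : {set 'I_n.+1} => #|I| == s)) /= addrC mulrDr; congr (_ + _).
rewrite mulrCA; congr (_ * _); rewrite mulr_sumr; apply: eq_bigr => I /andP[_ kI].
rewrite (bigD1 k) //= mulrCA; congr (_ * (_ * _)); apply: eq_bigl => i.
by rewrite in_setD1 andbC.
Qed.

Lemma PQH_avoiding_eq x y :
  (forall i, i != k -> x i = y i) -> PQH_avoiding x = PQH_avoiding y.
Proof.
move=> xy; congr (_ * _); apply: eq_bigr => I /andP[_ kI].
congr (_ * _); apply: eq_bigr => i iI; apply: xy.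
by apply: contraNneq kI => <-.
Qed.

Lemma PQH_link_eq x y :
  (forall i, i != k -> x i = y i) -> PQH_link x = PQH_link y.
Proof.
move=> xy; congr (_ * _); apply: eq_bigr => I _.
by congr (_ * _); apply: eq_bigr => i /setD1P[ik _]; apply: xy.
Qed.

Lemma PQH_link_ge0 x : (forall i, 0 <= x i) -> 0 <= PQH_link x.
Proof.
move=> x_ge0; rewrite mulr_ge0 // sumr_ge0 // => I _.
by rewrite mulr_ge0 // prodr_ge0.
Qed.

Definition scale_at (c : R) (x : 'I_n.+1 -> R) i := if i == k then c * x i else x i.

Lemma PQH_scale_at c x :
  PQH EQ H (scale_at c x) = PQH EQ H x + (c - 1) * x k * PQH_link x.
Proof.
have scaleE i : i != k -> scale_at c x i = x i by rewrite /scale_at => /negbTE ->.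
rewrite !PQH_split (PQH_avoiding_eq scaleE) (PQH_link_eq scaleE) /scale_at eqxx.
by ring.
Qed.

Lemma sum_powR_scale_at (p c : R) x : 0 <= c -> 0 <= x k ->
  \sum_(i < n.+1) scale_at c x i `^ p =
    \sum_(i < n.+1) x i `^ p + x k `^ p * (c `^ p - 1).
Proof.
move=> c_ge0 xk_ge0; rewrite [LHS](bigD1 k) //= [in RHS](bigD1 k) //=.
rewrite {1}/scale_at eqxx powRM //.
rewrite (eq_bigr (fun i => x i `^ p)) => [|i /negbTE]; last by rewrite /scale_at => ->.
by ring.
Qed.

Lemma lift_notin (J : {set 'I_n}) : k \notin lift k @: J.
Proof. by apply/imsetP => -[j _ kj]; move: (neq_lift k j); rewrite -kj eqxx. Qed.

(* A copy of [Q] avoiding [k] factors through [lift k]; pulling it back gives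
   an injection of the copies in [H] into the copies in [delete_vertex]. *)
Lemma NQ_delete_vertex (j0 : 'I_n) (J : {set 'I_n}) :
  (NQ EQ H (lift k @: J) <= NQ EQ delete_vertex J)%N.
Proof.
pose lift_edges (E : {set {set 'I_n}}) := [set lift k @: e | e : {set 'I_n} in E].
apply: leq_trans (leq_imset_card lift_edges _); apply: subset_leq_card.
apply/fintype.subsetP => E /imsetP[f]; rewrite inE => /and3P[injf /eqP imf sub] ->.
have fk i : k != f i.
  apply: contraNneq (lift_notin J) => kfi.
  by rewrite [X in X \in _]kfi -imf imset_f.
pose g := [ffun i => odflt j0 (unlift k (f i))].
have gK i : lift k (g i) = f i.
  by rewrite ffunE; case: (unlift_some (fk i)) => j e1 ->.
have imgK (e : {set 'I_s}) : lift k @: (g @: e) = f @: e.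
  by rewrite -imset_comp; apply: eq_imset => i /=; rewrite gK.
apply/imsetP; exists (img_edges g EQ).
  apply/imsetP; exists g => //; rewrite inE; apply/and3P; split.
  - by apply/injectiveP => i1 i2 gi; apply: (injectiveP _ injf); rewrite -!gK gi.
  - by rewrite -(inj_eq (imset_inj (@lift_inj _ k))) imgK imf.
  apply/fintype.subsetP => _ /imsetP[e eE ->]; rewrite inE imgK.
  by apply: (fintype.subsetP sub); apply: imset_f.
by rewrite /lift_edges /img_edges -imset_comp; apply: eq_imset => e /=; rewrite imgK.
Qed.

Lemma PQH_avoiding_le (j0 : 'I_n) x : (forall i, 0 <= x i) ->
  PQH_avoiding x <= PQH EQ delete_vertex (fun j => x (lift k j)).
Proof.
move=> x_ge0; rewrite /PQH_avoiding /PQH ler_wpM2l //.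
have lift_inj_set := imset_inj (@lift_inj _ k).
rewrite (eq_bigl (mem [set lift k @: J | J : {set 'I_n} in [set J : {set 'I_n} | #|J| == s]])); last first.
  move=> I /=; apply/andP/imsetP => [[/eqP cardI kI] | [J]]; last first.
    rewrite inE => /eqP cardJ ->.
    by rewrite card_imset ?cardJ ?lift_notin //; apply: lift_inj.
  have liftK : lift k @: [set j | lift k j \in I] = I.
    apply/setP => i; apply/imsetP/idP => [[j] | iI]; first by rewrite inE => jI ->.
    have ki : k != i by apply: contraNneq kI => ->.
    have [j ij _] := unlift_some ki.
    by exists j; rewrite // inE -ij.
  exists [set j | lift k j \in I] => //.
  by rewrite inE -(card_imset _ (@lift_inj _ k)) liftK cardI.
rewrite big_imset /=; last by move=> J1 J2 _ _; apply: lift_inj_set.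
rewrite (eq_bigl (fun J : {set 'I_n} => #|J| == s)) => [|J]; last by rewrite inE.
apply: ler_sum => J _; rewrite big_imset /=; last by move=> i j _ _; apply: lift_inj.
by rewrite ler_wpM2r ?prodr_ge0 // ler_nat NQ_delete_vertex.
Qed.

End VertexDeletion.

Section ExpLnBounds.
Variable R : realType.

Lemma ln_le_subr1 (b : R) : 0 < b -> ln b <= b - 1.
Proof. by move=> b_gt0; have := @le_ln1Dx R (b - 1); rewrite [1 + _]addrC subrK; apply; lra. Qed.

Lemma powR_ge1 (a b : R) : 1 <= a -> 0 <= b -> 1 <= a `^ b.
Proof. by move=> a_ge1 b_ge0; rewrite -(powRr0 a) ler_powR. Qed.

Lemma powR_le_expR (b a : R) : 0 < b -> 0 <= a -> b `^ a <= expR (a * (b - 1)).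
Proof.
by move=> b_gt0 a_ge0; rewrite /powR gt_eqF // ler_expR ler_wpM2l // ln_le_subr1.
Qed.

Lemma expR_le_invr (z : R) : z < 1 -> expR z <= (1 - z)^-1.
Proof.
move=> z_lt1; rewrite -[expR z]invrK lef_pV2 ?posrE ?invr_gt0 ?expR_gt0 ?subr_gt0 //.
by rewrite -expRN; have := expR_ge1Dx (- z); rewrite addrC.
Qed.

Lemma invr_le_expR (y : R) : 0 <= y <= 2^-1 -> (1 - y)^-1 <= expR (y + 2 * y ^+ 2).
Proof.
move=> /andP[y_ge0 y_le]; apply: le_trans (expR_ge1Dx _); rewrite addrA.
rewrite -[X in X <= _]mul1r ler_pdivrMr; last lra.
have : 0 <= y ^+ 2 * (1 - 2 * y) by rewrite mulr_ge0 ?sqr_ge0 //; lra.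
nra.
Qed.

Lemma ln_sub_le (a b : R) : 0 < a -> 0 < b -> ln b - ln a <= (b - a) / a.
Proof.
move=> a_gt0 b_gt0; rewrite -ln_div ?posrE //.
by apply: le_trans (ln_le_subr1 (divr_gt0 b_gt0 a_gt0)) _; rewrite mulrBl divff ?gt_eqF.
Qed.

Lemma ln_sub_ge (a b : R) : 0 < a -> 0 < b -> (b - a) / b <= ln b - ln a.
Proof.
move=> a_gt0 b_gt0; have := ln_sub_le b_gt0 a_gt0.
by rewrite -[b - a]opprB mulNr; lra.
Qed.

End ExpLnBounds.

Section Perturbation.
Variable R : realType.

Lemma le_of_forall_defect (M C a : R) : 0 <= C -> 0 < a ->
  (forall d, 0 < d -> a * d < 1 -> M * (1 - a * d) <= C) -> M <= C.
Proof.
move=> C_ge0 a_gt0 defect; rewrite leNgt; apply/negP => C_lt_M.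
have M_gt0 : 0 < M by apply: le_lt_trans C_lt_M.
pose d := (M - C) / (2 * M * a).
have ad : a * d = (M - C) / (2 * M) by rewrite /d; field; rewrite !gt_eqF.
have d_gt0 : 0 < d by rewrite /d divr_gt0 ?subr_gt0 // !mulr_gt0.
have ad_lt1 : a * d < 1 by rewrite ad ltr_pdivrMr ?mulr_gt0 //; lra.
have := defect d d_gt0 ad_lt1; rewrite ad.
have -> : M * (1 - (M - C) / (2 * M)) = (M + C) / 2 by field; rewrite gt_eqF.
lra.
Qed.

(* With [T = u^p], scaling the coordinate [u] by [1 + d] multiplies the p-th
   power sum by [1 + T ((1 + d)^p - 1)]; its [s/p]-th power is at most
   [1 + s T d] to first order in [d]. *)
Lemma perturbation_powR_bound (p s T d : R) :
  0 < p -> 0 <= s -> 0 <= T <= 1 -> 0 < d -> (p + s) * d < 1 ->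
  (1 + T * ((1 + d) `^ p - 1)) `^ (s / p) * (1 - p * d - s * T * d) <= 1 - p * d.
Proof.
move=> p_gt0 s_ge0 /andP[T_ge0 T_le1] d_gt0 small.
have pd_lt1 : p * d < 1.
  by apply: le_lt_trans small; rewrite mulrDl lerDl mulr_ge0 // ltW.
set q := 1 - p * d; set m := q - s * T * d.
have q_gt0 : 0 < q by rewrite /q subr_gt0.
have sTd_le : s * T * d <= s * d by rewrite mulrAC ler_piMr // mulr_ge0 // ltW.
have m_gt0 : 0 < m by rewrite /m /q; lra.
set B := (1 + d) `^ p - 1.
have B_le : B <= p * d / q.
  have -> : p * d / q = q^-1 - 1 by rewrite /q; field; rewrite gt_eqF.
  rewrite lerD2r; apply: le_trans (expR_le_invr pd_lt1).
  apply: le_trans (powR_le_expR _ (ltW p_gt0)) _; first lra.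
  by rewrite [1 + d - 1]addrC addKr.
have TB_ge0 : 0 <= T * B.
  by rewrite mulr_ge0 // subr_ge0 powR_ge1 // ?lerDl ltW.
set w := s * T * d / q.
have w_lt1 : w < 1 by rewrite /w ltr_pdivrMr // mul1r -subr_gt0.
have exponent_le : s / p * (1 + T * B - 1) <= w.
  rewrite [1 + _ - 1]addrC addKr /w (_ : s * T * d / q = s / p * (T * (p * d / q))).
    by apply: ler_wpM2l; [rewrite divr_ge0 // ltW | apply: ler_wpM2l].
  by field; rewrite !gt_eqF.
rewrite -ler_pdivlMr // (_ : q / m = (1 - w)^-1); last first.
  by rewrite /w /m; field; rewrite !gt_eqF.
have base_gt0 : 0 < 1 + T * B by lra.
apply: le_trans (powR_le_expR base_gt0 _) _; first by rewrite divr_ge0 // ltW.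
by apply: le_trans (expR_le_invr w_lt1); rewrite ler_expR.
Qed.

End Perturbation.

Section DeletionBound.
Variables (R : realType) (s : nat) (EQ : {set {set 'I_s}}) (p : R).
Variables (n : nat) (k : 'I_n.+1) (H : {set {set 'I_n.+1}}).
Hypothesis p_gt1 : 1 < p.
Let p_gt0 : 0 < p := lt_trans ltr01 p_gt1.

Lemma sum_powR_eq1 (x : 'I_n.+1 -> R) :
  principal_eigvec p EQ H x -> \sum_(i < n.+1) x i `^ p = 1.
Proof.
move=> [x_ge0 [/(pnorm_eq1 p_gt0) <- _]].
by apply: eq_bigr => i _; rewrite ger0_norm.
Qed.

(* First-order optimality at a principal eigenvector, in the direction of
   scaling the coordinate [k]. *)
Lemma link_le_lamQH (x : 'I_n.+1 -> R) : principal_eigvec p EQ H x ->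
  x k * PQH_link EQ k H x <= s%:R * lamQH p EQ H * x k `^ p.
Proof.
move=> eig; have sum1 := sum_powR_eq1 eig; case: eig => x_ge0 [_ eig].
set lam := lamQH p EQ H; set D := PQH_link EQ k H x; set u := x k; set T := u `^ p.
have lam_ge0 : 0 <= lam by rewrite /lam -eig PQH_ge0.
have D_ge0 : 0 <= D by apply: PQH_link_ge0.
have T_ge0 : 0 <= T by rewrite powR_ge0.
have T_le1 : T <= 1.
  by rewrite -sum1 /T /u (bigD1 k) //= lerDl sumr_ge0 // => i _; rewrite powR_ge0.
have s_ge0 : 0 <= s%:R :> R by [].
have a_gt0 : 0 < p + s%:R by have := p_gt0; lra.
apply: (le_of_forall_defect _ a_gt0) => [|d d_gt0 small]; first by rewrite !mulr_ge0.
have y_ge0 i : 0 <= scale_at k (1 + d) x i.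
  by rewrite /scale_at; case: ifP => _; rewrite ?mulr_ge0 //; lra.
have := PQH_le_lamQH_powR EQ p_gt0 H y_ge0.
rewrite PQH_scale_at sum_powR_scale_at ?x_ge0 //; last lra.
rewrite sum1 eig -/lam -/D -/u -/T [1 + d - 1]addrC addKr.
set B := (1 + d) `^ p - 1.
have TB_ge0 : 0 <= T * B by rewrite mulr_ge0 // subr_ge0 powR_ge1 // ?lerDl ltW.
move=> /(_ ltac:(lra)) main.
have := perturbation_powR_bound p_gt0 s_ge0 (introT andP (conj T_ge0 T_le1)) d_gt0 small.
set m := 1 - p * d - s%:R * T * d; rewrite -/B => bound.
have sTd_le : s%:R * T * d <= s%:R * d by rewrite mulrAC ler_piMr // mulr_ge0 // ltW.
have m_gt0 : 0 < m by rewrite /m; lra.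
have : (lam + d * u * D) * m <= lam * (1 - p * d).
  apply: le_trans (ler_wpM2r (ltW m_gt0) main) _.
  by rewrite -mulrA; apply: ler_wpM2l.
have -> : (lam + d * u * D) * m = lam * m + u * D * m * d by ring.
have -> : lam * (1 - p * d) = lam * m + s%:R * lam * T * d by rewrite /m; ring.
rewrite lerD2l ler_pM2r // => link_le.
apply: le_trans link_le; apply: ler_wpM2l; first by rewrite mulr_ge0 ?x_ge0.
by rewrite /m; lra.
Qed.

Lemma lamQH_delete_vertex r (P : graph_property) (j0 : 'I_n) (x : 'I_n.+1 -> R) :
  hereditary r P -> P n.+1 H -> principal_eigvec p EQ H x -> x k `^ p < 1 ->
  lamQH p EQ H * (1 - s%:R * x k `^ p) <=
    lamQPn p EQ P n * (1 - x k `^ p) `^ (s%:R / p).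
Proof.
move=> [_ P_induced _] PH eig t_lt1.
have link_le := link_le_lamQH eig.
have sum1 := sum_powR_eq1 eig; case: eig => x_ge0 [_ eig].
have rest : \sum_(j < n) x (lift k j) `^ p = 1 - x k `^ p.
  by move: sum1; rewrite (bigD1_ord k) //=; lra.
have := PQH_le_lamQH_powR EQ p_gt0 (delete_vertex k H) (fun j => x_ge0 (lift k j)).
rewrite rest => /(_ ltac:(lra)) /(le_trans (PQH_avoiding_le EQ k H j0 x_ge0)) avoiding_le.
have P_delete : P n (delete_vertex k H) := P_induced _ _ _ (@lift_inj _ k) H PH.
have lam_le := lamQH_le_lamQPn EQ p_gt0 P_delete.
apply: le_trans (ler_wpM2r (powR_ge0 _ _) lam_le).
apply: le_trans avoiding_le; move: (PQH_split EQ k H x) link_le; rewrite eig; lra.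
Qed.

End DeletionBound.

Section PotentialStep.
Variable R : realType.
Implicit Types (p sr t nn mm : R).

Lemma ln_ratio_le_of_deletion p sr lamn lamm t :
  0 < p -> 1 <= sr -> 0 < lamn -> 0 < lamm -> 0 <= t -> sr * t <= 2^-1 ->
  lamn * (1 - sr * t) <= lamm * (1 - t) `^ (sr / p) ->
  ln lamn - ln lamm <= (sr - sr / p) * t + 2 * (sr * t) ^+ 2.
Proof.
move=> p_gt0 sr_ge1 lamn_gt0 lamm_gt0 t_ge0 st_le deletion.
have t_le_st : t <= sr * t by rewrite ler_peMl.
have st_lt1 : 0 < 1 - sr * t by lra.
have pow_le : (1 - t) `^ (sr / p) <= expR (sr / p * - t).
  apply: le_trans (powR_le_expR _ _) _; first lra; first by rewrite divr_ge0 //; lra.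
  by rewrite [1 - t - 1]addrC addKr.
have inv_le : (1 - sr * t)^-1 <= expR (sr * t + 2 * (sr * t) ^+ 2).
  by apply: invr_le_expR; rewrite mulr_ge0 //; lra.
set E := (sr - sr / p) * t + 2 * (sr * t) ^+ 2.
have : lamn <= lamm * expR E.
  have st_neq0 : 1 - sr * t != 0 by rewrite gt_eqF.
  rewrite -[lamn](mulfK st_neq0).
  apply: le_trans (ler_wpM2r _ deletion) _; first by rewrite invr_ge0 ltW.
  rewrite -mulrA (_ : E = sr / p * - t + (sr * t + 2 * (sr * t) ^+ 2)); last first.
    by rewrite /E; ring.
  rewrite expRD; apply: (ler_wpM2l (ltW lamm_gt0)).
  by apply: ler_pM pow_le inv_le; rewrite ?powR_ge0 ?invr_ge0 ?ltW.
rewrite -ler_ln ?posrE ?mulr_gt0 ?expR_gt0 // lnM ?posrE ?expR_gt0 // expRK.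
lra.
Qed.

Lemma t_le_inv p sr t nn : 1 < p -> 0 < sr -> 0 < nn -> 0 < ln nn ->
  t < nn^-1 * (1 - p / ((p - 1) * sr * ln nn)) -> t <= nn^-1.
Proof.
move=> p_gt1 sr_gt0 nn_gt0 ln_gt0 t_lt; apply/ltW/(lt_le_trans t_lt).
by rewrite ger_pMr ?invr_gt0 // gerBl divr_ge0 ?mulr_ge0 //; lra.
Qed.

(* The threshold on [t] is chosen so that [(sr - sr/p) t] falls short of
   [(sr - sr/p) / nn] by exactly [1 / (nn ln nn)]. *)
Lemma drift_le p sr t nn : 1 < p -> 0 < sr -> 0 < nn -> 0 < ln nn -> 0 <= t ->
  t < nn^-1 * (1 - p / ((p - 1) * sr * ln nn)) ->
  (sr - sr / p) * t + 2 * (sr * t) ^+ 2 <=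
    (sr - sr / p) / nn - (nn * ln nn)^-1 + 2 * sr ^+ 2 / nn ^+ 2.
Proof.
move=> p_gt1 sr_gt0 nn_gt0 ln_gt0 t_ge0 t_lt.
have t_le := t_le_inv p_gt1 sr_gt0 nn_gt0 ln_gt0 t_lt.
have a_ge0 : 0 <= sr - sr / p.
  by rewrite subr_ge0 ler_pdivrMr ?ler_peMr ?ltW //; lra.
apply: lerD.
  have -> : (sr - sr / p) / nn - (nn * ln nn)^-1 =
      (sr - sr / p) * (nn^-1 * (1 - p / ((p - 1) * sr * ln nn))).
    have p_gt0 : 0 < p by lra.
    by field; rewrite !gt_eqF ?subr_gt0.
  by rewrite ler_wpM2l // ltW.
rewrite exprMn -mulrA -exprVn; apply: ler_wpM2l => //; apply: ler_wpM2l; first exact: sqr_ge0.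
by rewrite ler_sqr ?nnegrE ?invr_ge0 ?(ltW nn_gt0).
Qed.

Lemma mul_ln_le c nn : 0 <= c -> 1 <= nn -> 2 * c ^+ 2 <= nn -> c * ln nn <= nn.
Proof.
move=> c_ge0 nn_ge1 c_small.
have ln_ge0 : 0 <= ln nn by rewrite ln_ge0.
have ln_sqr : ln nn ^+ 2 <= 2 * nn.
  have := expR_ge1Dxn 1 ln_ge0; rewrite lnK ?posrE; last lra.
  by rewrite (_ : 2`!%:R = 2 :> R) //; lra.
rewrite -ler_sqr ?nnegrE ?mulr_ge0 //; last lra.
rewrite exprMn; apply: le_trans (ler_wpM2l (sqr_ge0 c) ln_sqr) _.
by rewrite mulrA [_ * 2]mulrC expr2 ler_wpM2r //; lra.
Qed.

Lemma sqr_succ_le_cube mm : 3 <= mm -> (mm + 1) ^+ 2 <= mm ^+ 3.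
Proof.
move=> mm_ge3.
have : 0 <= mm * (mm - 3) * (mm + 1) by rewrite !mulr_ge0 //; lra.
have : 3 * 3 <= mm * mm by apply: ler_pM => //; lra.
have -> : mm ^+ 3 = mm * (mm - 3) * (mm + 1) + 2 * mm ^+ 2 + 3 * mm by ring.
rewrite expr2; lra.
Qed.

(* The drift of the potential [(sr - sr/p) ln n - ln (ln n) / 4] from [m] to
   [n = m + 1] dominates the bound of [drift_le]. *)
Lemma drift_le_potential_gain a S nn mm : 0 <= a -> 3 <= mm -> nn = mm + 1 ->
  4 * S * ln nn <= nn ->
  a / nn - (nn * ln nn)^-1 + 2 * S / nn ^+ 2 <=
    a * (ln nn - ln mm) - (ln (ln nn) - ln (ln mm)) / 4.
Proof.
move=> a_ge0 mm_ge3 nnE S_small.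
have mm_gt0 : 0 < mm by lra.
have nn_gt0 : 0 < nn by lra.
have Lm_gt0 : 0 < ln mm by rewrite ln_gt0; lra.
have Ln_gt0 : 0 < ln nn by rewrite ln_gt0; lra.
have F1 : nn^-1 <= ln nn - ln mm.
  by apply: le_trans (ln_sub_ge mm_gt0 nn_gt0); rewrite nnE addrAC subrr add0r div1r.
have F2 : ln nn - ln mm <= mm^-1.
  by apply: le_trans (ln_sub_le mm_gt0 nn_gt0) _; rewrite nnE addrAC subrr add0r div1r.
have F3 := ln_sub_le Lm_gt0 Ln_gt0.
have F4 : 2 * ln nn <= 3 * ln mm.
  have := sqr_succ_le_cube mm_ge3; rewrite -nnE -ler_ln ?posrE ?exprn_gt0 //.
  by rewrite !lnXn // -(mulr_natl (ln nn) 2) -(mulr_natl (ln mm) 3).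
set Ln := ln nn in Ln_gt0 F1 F2 F3 F4 S_small *; set Lm := ln mm in Lm_gt0 F1 F2 F3 F4 *.
have h1 : ln Ln - ln Lm <= (mm * Lm)^-1.
  by rewrite invfM; apply: le_trans F3 _; rewrite ler_wpM2r // invr_ge0 ltW.
have h2 : (mm * Lm)^-1 <= 2 * (nn * Ln)^-1.
  have -> : 2 * (nn * Ln)^-1 = (nn * Ln / 2)^-1 by field; rewrite !gt_eqF.
  rewrite lef_pV2 ?posrE ?mulr_gt0 ?divr_gt0 //.
  have : 0 <= (mm - 3) * Ln by rewrite mulr_ge0 //; lra.
  have : 0 <= mm * (3 * Lm - 2 * Ln) by rewrite mulr_ge0 //; lra.
  rewrite nnE; nra.
have h3 : 2 * S / nn ^+ 2 <= (nn * Ln)^-1 / 2.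
  have -> : 2 * S / nn ^+ 2 = (4 * S * Ln) * ((nn * Ln)^-1 / 2 / nn).
    by field; rewrite !gt_eqF.
  apply: le_trans (_ : nn * ((nn * Ln)^-1 / 2 / nn) <= _).
    by rewrite ler_wpM2r // !divr_ge0 // ?invr_ge0 ltW // mulr_gt0.
  by rewrite mulrC divfK ?gt_eqF.
have h4 : a / nn <= a * (Ln - Lm) by rewrite ler_wpM2l.
lra.
Qed.

Lemma potential_step p sr lamn lamm t nn mm :
  1 < p -> 1 <= sr -> 0 < lamn -> 0 < lamm ->
  lamn * (1 - sr * t) <= lamm * (1 - t) `^ (sr / p) ->
  0 <= t -> t < nn^-1 * (1 - p / ((p - 1) * sr * ln nn)) ->
  nn = mm + 1 -> 3 <= mm -> 2 * sr <= nn -> 32 * sr ^+ 4 <= nn ->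
  ln lamn - (sr - sr / p) * ln nn + ln (ln nn) / 4 <=
    ln lamm - (sr - sr / p) * ln mm + ln (ln mm) / 4.
Proof.
move=> p_gt1 sr_ge1 lamn_gt0 lamm_gt0 deletion t_ge0 t_lt nnE mm_ge3 sr_le sr4_le.
have sr_gt0 : 0 < sr by lra.
have nn_gt0 : 0 < nn by lra.
have ln_gt0 : 0 < ln nn by rewrite ln_gt0; lra.
have st_le : sr * t <= 2^-1.
  apply: le_trans (ler_wpM2l (ltW sr_gt0) (t_le_inv p_gt1 sr_gt0 nn_gt0 ln_gt0 t_lt)) _.
  by rewrite ler_pdivrMr // ler_pdivlMl //; lra.
have := ln_ratio_le_of_deletion (lt_trans ltr01 p_gt1) sr_ge1 lamn_gt0 lamm_gt0 t_ge0 st_le deletion.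
have := drift_le p_gt1 sr_gt0 nn_gt0 ln_gt0 t_ge0 t_lt.
have a_ge0 : 0 <= sr - sr / p.
  by rewrite subr_ge0 ler_pdivrMr ?ler_peMr ?ltW //; lra.
have S_small : 4 * sr ^+ 2 * ln nn <= nn.
  apply: mul_ln_le; [by rewrite mulr_ge0 ?sqr_ge0 | lra |].
  by rewrite (_ : 2 * _ = 32 * sr ^+ 4) //; ring.
have := drift_le_potential_gain a_ge0 mm_ge3 nnE S_small.
lra.
Qed.

End PotentialStep.

Section ExtremaAndGrowth.
Variable R : realType.

Lemma xmin_attained n (x : 'I_n -> R) : (0 < n)%N -> exists k, xmin x = x k.
Proof.
move=> n_gt0; have [k _ k_min] := @arg_minP _ _ _ (Ordinal n_gt0) predT x isT.
have lb : lbound (range x) (x k) by move=> _ [i _ <-]; apply: k_min.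
exists k; apply/le_anti/andP; split; last by apply: lb_le_inf => //; exists (x k), k.
by apply: (ge_inf (E := range x)); [exists (x k) | exists k].
Qed.

Lemma nonincreasing_from (u : nat -> R) M :
  (forall m, (M <= m)%N -> u m.+1 <= u m) -> forall n, (M <= n)%N -> u n <= u M.
Proof.
move=> step n /subnK <-; elim: (n - M)%N => [|d IH]; first by rewrite add0n.
by apply: le_trans IH; rewrite addSn step // leq_addl.
Qed.

Lemma ln_ln_unbounded (K : R) : exists N, forall n, (N <= n)%N -> K < ln (ln n%:R).
Proof.
exists (Num.Def.archi_bound (expR (expR K))) => n n_ge.
have n_gt : expR (expR K) < n%:R.
  by apply: lt_le_trans (archi_boundP (ltW (expR_gt0 _))) _; rewrite ler_nat.
have ln_gt : expR K < ln n%:R by rewrite -[X in X < _]expRK ltr_ln ?posrE ?expR_gt0 // (lt_trans _ n_gt) ?expR_gt0.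
by rewrite -[X in X < _]expRK ltr_ln ?posrE ?expR_gt0 // (lt_trans _ ln_gt) ?expR_gt0.
Qed.

End ExtremaAndGrowth.

Section MinimalEntryContradiction.
Variables (R : realType) (p : R) (r s : nat) (EQ : {set {set 'I_s}}).
Variables (P : graph_property) (H : forall n : nat, {set {set 'I_n}}).
Variables (x : forall n : nat, 'I_n -> R) (N : nat).
Local Open Scope classical_set_scope.
Hypotheses (p_gt1 : 1 < p) (r_ge2 : (2 <= r)%N) (r_le_s : (r <= s)%N).
Hypothesis hered : hereditary r P.
Hypothesis extremal : forall n, (s <= n)%N ->
  [/\ @P n (H n), lamQH p EQ (H n) = lamQPn p EQ P n & principal_eigvec p EQ (H n) (@x n)].
Hypothesis small_entries : forall n, (N <= n)%N -> (s <= n)%N ->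
  xmin (@x n) `^ p < (n%:R)^-1 * (1 - p / ((p - 1) * s%:R * ln (n%:R : R))).

Definition potential n : R :=
  ln (lamQPn p EQ P n) - (s%:R - s%:R / p) * ln n%:R + ln (ln n%:R) / 4.

Lemma potential_succ_le m : (N + 32 * s ^ 4 + 3 <= m)%N ->
  0 < lamQPn p EQ P m.+1 -> 0 < lamQPn p EQ P m -> potential m.+1 <= potential m.
Proof.
move=> m_large lam_succ_gt0 lam_gt0.
have s_ge1 : (1 <= s)%N by apply: leq_trans r_le_s; apply: leq_trans r_ge2.
have s_le_pow : (s <= s ^ 4)%N by rewrite -{1}[s]expn1 leq_pexp2l.
have s_le : (s <= m.+1)%N by lia.
have [k xk] := xmin_attained (@x m.+1) (ltn0Sn m).
have [PH lamE eig] := extremal s_le.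
have N_le : (N <= m.+1)%N by lia.
have := small_entries N_le s_le; rewrite xk => t_lt.
have t_lt1 : @x m.+1 k `^ p < 1.
  have m_succ_gt1 : 1 < m.+1%:R :> R by rewrite ltr1n; lia.
  have ln_gt0 : 0 < ln (m.+1%:R : R) by rewrite ln_gt0.
  have s_gt0 : 0 < s%:R :> R by rewrite ltr0n.
  apply: le_lt_trans (t_le_inv p_gt1 s_gt0 _ ln_gt0 t_lt) _; first lra.
  by rewrite invf_lt1 //; lra.
have m_gt0 : (0 < m)%N by lia.
have := lamQH_delete_vertex p_gt1 (Ordinal m_gt0) hered PH eig t_lt1; rewrite lamE => deletion.
apply: (potential_step p_gt1 _ lam_succ_gt0 lam_gt0 deletion (powR_ge0 _ _) t_lt).
- by rewrite ler1n.
- by rewrite -addn1 natrD.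
- by rewrite (ler_nat R 3); lia.
- by rewrite -natrM ler_nat; lia.
- by rewrite -natrX -natrM ler_nat; lia.
Qed.

Lemma lamQPn_gt0 n : (0 < n)%N -> 0 < lamQP_seq p EQ P n -> 0 < lamQPn p EQ P n.
Proof. by move=> n_gt0; rewrite pmulr_lgt0 // powR_gt0 // ltr0n. Qed.

Lemma ln_lamQP_seq n : (0 < n)%N -> 0 < lamQPn p EQ P n ->
  ln (lamQP_seq p EQ P n) = ln (lamQPn p EQ P n) - (s%:R - s%:R / p) * ln n%:R.
Proof.
move=> n_gt0 lam_gt0.
by rewrite /lamQP_seq lnM ?posrE ?powR_gt0 ?ltr0n // ln_powR; ring.
Qed.

Variable L : R.
Hypotheses (L_gt0 : 0 < L) (lim : (fun n => lamQP_seq p EQ P n) @ \oo --> L).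

Lemma small_entries_contradiction : False.
Proof.
have half_gt0 : 0 < L / 2 by rewrite divr_gt0.
have [M _ seq_large] : \forall n \near \oo, L / 2 < lamQP_seq p EQ P n.
  by apply: (cvgr_gt L lim (L / 2)); rewrite ltr_pdivrMr // ltr_pMr // ltr1n.
have lam_gt0 n : (M <= n)%N -> (0 < n)%N -> 0 < lamQPn p EQ P n.
  by move=> /seq_large seq_gt n_gt0; apply: lamQPn_gt0 => //; apply: lt_trans seq_gt.
pose M0 := (N + M + 32 * s ^ 4 + 3)%N.
have decr m : (M0 <= m)%N -> potential m.+1 <= potential m.
  move=> m_ge; apply: potential_succ_le; rewrite ?lam_gt0 //; lia.
have [K lnln_large] := ln_ln_unbounded (4 * (potential M0 - ln (L / 2))).
pose n := (M0 + K)%N.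
have n_ge : (M0 <= n)%N by apply: leq_addr.
have n_gt0 : (0 < n)%N by rewrite /n /M0; lia.
have n_ge_M : (M <= n)%N by rewrite /n /M0; lia.
have := nonincreasing_from decr n_ge.
have := lnln_large n (leq_addl _ _).
have : ln (L / 2) < ln (lamQP_seq p EQ P n).
  by rewrite ltr_ln ?posrE ?seq_large // (lt_trans half_gt0 (seq_large n n_ge_M)).
by rewrite ln_lamQP_seq ?lam_gt0 // /potential; lra.
Qed.

End MinimalEntryContradiction.

Local Open Scope classical_set_scope.

Theorem lemma3p5 (R : realType) (p : R) (r s : nat)
  (EQ : {set {set 'I_s}}) (P : graph_property)
  (H : forall n : nat, {set {set 'I_n}}) (x : forall n : nat, 'I_n -> R) :
  1 < p -> (2 <= r)%N -> (r <= s)%N -> is_rgraph r EQ ->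
  hereditary r P ->
  (exists L : R, 0 < L /\ (fun n => lamQP_seq p EQ P n) @ \oo --> L) ->
  (forall n, (s <= n)%N ->
     [/\ P n (H n), lamQH p EQ (H n) = lamQPn p EQ P n &
         principal_eigvec p EQ (H n) (x n)]) ->
  forall N : nat, exists n : nat,
    [/\ (N <= n)%N, (s <= n)%N &
      xmin (x n) `^ p >=
        (n%:R)^-1 * (1 - p / ((p - 1) * s%:R * ln (n%:R : R)))].
Proof.
move=> p_gt1 r_ge2 r_le_s _ hered [L [L_gt0 lim]] extremal N.
apply/not_existsP => no_witness.
apply: (small_entries_contradiction (N := N) p_gt1 r_ge2 r_le_s hered extremal _ L_gt0 lim).
move=> n N_le s_le; rewrite ltNge; apply/negP => large.
by apply: (no_witness n); split.
Qed.
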